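(* Let $\mathbf v\in\mathbb R^{n\times m}_{<0}$, $\mathbf b\in\mathbb R^n_{<0}$, $\mathbf u\in\mathbb R^n_{<0}$, and $\tau=\tau(\mathbf u,\mathbf b)=(b_i/u_i)_{i\in[n]}$. Then $\mathbf u$ is a competitive utility profile for $(\mathbf v,\mathbf b)$ if and only if there exists an allocation $\mathbf z$ with $\mathbf u(\mathbf z)=\mathbf u$ and $G_{\mathbf z}$ a subgraph of $G_\tau(\mathbf v)$. Moreover, the set of all such $\mathbf z$ coincides with the set of competitive allocations $\mathbf z$ for $(\mathbf v,\mathbf b)$ with $\mathbf u(\mathbf z)=\mathbf u$.
   Context: Setup: agents $[n]$, chores $[m]$, allocations $\mathbf z\in\mathbb R^{n\times m}_{\ge0}$ with column sums $1$, $u_i(\mathbf z_i)=\sum_jv_{i,j}z_{i,j}$. Competitive allocation for budgets $\mathbf b$: there exist prices $\mathbf p\in\mathbb R^m_{<0}$ such that each $\mathbf z_i$ maximizes $u_i$ over bundles $\mathbf x\in\mathbb R^m_{\ge0}$ with $\sum_jp_jx_j\le b_i$; a competitive utility profile is $\mathbf u(\mathbf z)$ for such $\mathbf z$. $G_{\mathbf z}$: edge $(i,j)$ iff $z_{i,j}>0$. For $\tau\in\mathbb R^n_{>0}$, $G_\tau(\mathbf v)$: edge $(i,j)$ iff $\tau_i|v_{i,j}|\le\tau_{i'}|v_{i',j}|$ for all $i'$. *)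

(* reals are modelled by an arbitrary real field R
   (the statement is purely order-theoretic/algebraic). *)
From HB Require Import structures.
From mathcomp Require Import all_boot all_order all_algebra.
Set Implicit Arguments. Unset Strict Implicit. Unset Printing Implicit Defensive.
Import Order.TTheory GRing.Theory Num.Theory.
Local Open Scope ring_scope.

Section Defs.
Variables (R : realFieldType) (n m : nat).

Definition util (v : 'I_n -> 'I_m -> R) (i : 'I_n) (x : 'I_m -> R) : R :=
  \sum_(j < m) v i j * x j.

Definition util_profile (v : 'I_n -> 'I_m -> R) (z : 'I_n -> 'I_m -> R)
  : 'I_n -> R := fun i => util v i (z i).

Definition allocation (z : 'I_n -> 'I_m -> R) : Prop :=
  (forall i j, 0 <= z i j) /\ (forall j, \sum_(i < n) z i j = 1).

Definition cost (p : 'I_m -> R) (x : 'I_m -> R) : R := \sum_(j < m) p j * x j.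

Definition competitive (v : 'I_n -> 'I_m -> R) (b : 'I_n -> R)
  (z : 'I_n -> 'I_m -> R) : Prop :=
  allocation z /\
  exists p : 'I_m -> R, (forall j, p j < 0) /\
    forall i, cost p (z i) <= b i /\
      forall x : 'I_m -> R, (forall j, 0 <= x j) -> cost p x <= b i ->
        util v i x <= util v i (z i).

Definition competitive_profile (v : 'I_n -> 'I_m -> R) (b : 'I_n -> R)
  (u : 'I_n -> R) : Prop :=
  exists z, competitive v b z /\ util_profile v z = u.

Definition Gtau_edge (tau : 'I_n -> R) (v : 'I_n -> 'I_m -> R)
  (i : 'I_n) (j : 'I_m) : bool :=
  [forall i' : 'I_n, tau i * `|v i j| <= tau i' * `|v i' j|].

Definition subgraph_Gtau (z : 'I_n -> 'I_m -> R) (tau : 'I_n -> R)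
  (v : 'I_n -> 'I_m -> R) : Prop :=
  forall i j, 0 < z i j -> Gtau_edge tau v i j.

End Defs.

From HB Require Import structures.
From mathcomp Require Import all_boot all_order all_algebra.
From mathcomp Require Import ring lra.
Import Order.TTheory GRing.Theory Num.Theory.
Local Open Scope ring_scope.

(* Put tau_i = b_i / u_i > 0.  Call prices p "supporting" when
   tau_i v_ij <= p_j for all agents i and chores j, and "tight" on z when
   equality holds on every edge of G_z.  Since v < 0, (i,j) is an edge of
   G_tau(v) iff tau_i v_ij is the largest of the tau_i' v_i'j, so supporting
   prices that are tight on z force G_z <= G_tau(v).
   - Competitive => subgraph: buying only chore j for the whole budget b_i is
     affordable, so optimality of z_i gives tau_i v_ij <= p_j (prices are
     supporting); then sum_j (p_j - tau_i v_ij) z_ij = cost(z_i) - b_i <= 0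
     is a sum of nonnegative terms, so each term vanishes (tightness).
   - Subgraph => competitive: every chore is allocated to someone, so the
     price p_j := tau_k v_kj for some k with z_kj > 0 is well defined,
     negative, supporting and tight.  Tightness gives cost(z_i) = b_i and
     supporting prices give tau_i u_i(x) <= cost(x) <= b_i for any
     affordable x, i.e. u_i(x) <= u_i. *)

(* Scalar core of the single-chore deviation: spending the budget b = c p
   on one chore of value w and price p < 0 yields utility w c; if that is
   at most the utility u < 0 with t u = b, then t w <= p. *)
Lemma deviation_bound (R : realFieldType) (t w p c u b : R) :
  p < 0 -> u < 0 -> c * p = b -> t * u = b -> w * c <= u -> t * w <= p.
Proof.
move=> hp hu hc ht hw.
have factor : (t * w - p) * u = p * (w * c - u).
  have -> : (t * w - p) * u = (t * u) * w - p * u by ring.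
  by rewrite ht -hc; ring.
have : 0 <= p * (w * c - u) by nra.
nra.
Qed.

Section Corollary5.
Variables (R : realFieldType) (n m : nat)
  (v : 'I_n -> 'I_m -> R) (b u : 'I_n -> R).
Hypotheses (hv : forall i j, v i j < 0) (hb : forall i, b i < 0)
  (hu : forall i, u i < 0).

Let tau := fun i => b i / u i.

Definition supporting (p : 'I_m -> R) : Prop :=
  forall i j, tau i * v i j <= p j.

Definition tight (p : 'I_m -> R) (z : 'I_n -> 'I_m -> R) : Prop :=
  forall i j, 0 < z i j -> p j = tau i * v i j.

Lemma tau_gt0 i : 0 < tau i.
Proof. by rewrite /tau -mulrNN -invrN divr_gt0 // oppr_gt0. Qed.

Lemma tau_util i : tau i * u i = b i.
Proof. by rewrite /tau divfK // ltr0_neq0. Qed.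

Lemma util_profileE {z} i : util_profile v z = u -> util v i (z i) = u i.
Proof. by move/(congr1 (fun f => f i)). Qed.

(* Because all values v_ij are negative, edges of G_tau(v) are the maximisers of
   tau_i v_ij over the agents i. *)
Lemma Gtau_edgeP i j :
  Gtau_edge tau v i j <-> forall i', tau i' * v i' j <= tau i * v i j.
Proof.
have normE k : tau k * `|v k j| = - (tau k * v k j).
  by rewrite ltr0_norm // mulrN.
split => [/forallP h i' | h]; last apply/forallP => i'.
- by have := h i'; rewrite !normE lerN2.
- by rewrite !normE lerN2.
Qed.

Lemma subgraph_of_tight p z :
  supporting p -> tight p z -> subgraph_Gtau z tau v.
Proof. by move=> hs ht i j /ht hpj; apply/Gtau_edgeP => i'; rewrite -hpj. Qed.

Lemma util_le_cost {p} i {x} :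
  supporting p -> (forall j, 0 <= x j) -> tau i * util v i x <= cost p x.
Proof.
move=> hs hx; rewrite /util /cost mulr_sumr; apply: ler_sum => j _.
by rewrite mulrA ler_wpM2r.
Qed.

Lemma cost_tight {p z} i :
  allocation z -> tight p z -> cost p (z i) = tau i * util v i (z i).
Proof.
move=> [hz0 _] ht; rewrite /cost /util mulr_sumr; apply: eq_bigr => j _.
have [<-|hij] := eqVneq 0 (z i j); first by rewrite !mulr0.
by rewrite (ht i j) ?mulrA // lt_def eq_sym hij hz0.
Qed.

Section CompetitivePrices.
Context {z : 'I_n -> 'I_m -> R} {p : 'I_m -> R}.
Hypotheses (hp : forall j, p j < 0) (hzu : util_profile v z = u).
Hypothesis hopt : forall i, cost p (z i) <= b i /\
  forall x : 'I_m -> R, (forall j, 0 <= x j) -> cost p x <= b i ->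
    util v i x <= util v i (z i).

(* Spending the whole budget on a single chore is affordable, so equilibrium
   prices are supporting. *)
Lemma competitive_supporting : supporting p.
Proof.
move=> i k; pose c := b i / p k.
pose x := fun l : 'I_m => if l == k then c else 0.
have hc : c * p k = b i by rewrite /c divfK // ltr0_neq0.
have c_ge0 : 0 <= c by rewrite /c -mulrNN -invrN ltW // divr_gt0 // oppr_gt0.
have hx0 l : 0 <= x l by rewrite /x; case: eqP.
have sum_x (F : 'I_m -> R) : \sum_(l < m) F l * x l = F k * c.
  rewrite (bigD1 k) //= big1 ?addr0 /x ?eqxx // => l /negbTE ->.
  by rewrite mulr0.
have hcost : cost p x <= b i by rewrite /cost sum_x mulrC hc.
have := (hopt i).2 x hx0 hcost; rewrite {1}/util sum_x util_profileE //.
exact: deviation_bound (hp k) (hu i) hc (tau_util i).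
Qed.

(* Complementary slackness: sum_j (p_j - tau_i v_ij) z_ij = cost(z_i) - b_i
   is a nonpositive sum of nonnegative terms. *)
Lemma competitive_tight : allocation z -> tight p z.
Proof.
move=> [hz0 _] i j hij.
pose gap k := (p k - tau i * v i k) * z i k.
have gap_ge0 k : 0 <= gap k.
  by rewrite mulr_ge0 // subr_ge0 competitive_supporting.
have gap_sum : \sum_(k < m) gap k = cost p (z i) - b i.
  rewrite -(tau_util i) -(util_profileE i hzu) /cost /util mulr_sumr -sumrB.
  by apply: eq_bigr => k _; rewrite /gap; ring.
have gap0 : \sum_(k < m) gap k = 0.
  apply/eqP; rewrite eq_le sumr_ge0 // andbT gap_sum subr_le0.
  exact: (hopt i).1.
have /eqP := psumr_eq0P (fun k _ => gap_ge0 k) gap0 (i := j) isT.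
by rewrite /gap mulf_eq0 (gt_eqF hij) orbF subr_eq0 => /eqP.
Qed.

End CompetitivePrices.

Lemma competitive_subgraph (z : 'I_n -> 'I_m -> R) :
  competitive v b z -> util_profile v z = u -> subgraph_Gtau z tau v.
Proof.
move=> [hz [p [hp hopt]]] hzu.
exact: subgraph_of_tight (competitive_supporting hp hzu hopt)
  (competitive_tight hp hzu hopt hz).
Qed.

Lemma allocation_holder {z : 'I_n -> 'I_m -> R} : allocation z -> forall j, exists i, 0 < z i j.
Proof.
move=> [hz0 hz1] j; case: (pickP (fun i => 0 < z i j)) => [i hi|none].
  by exists i.
have := hz1 j; rewrite big1 => [/eqP|i _]; first by rewrite eq_sym oner_eq0.
by apply/eqP; rewrite eq_le hz0 andbT leNgt none.
Qed.

(* Pricing each chore at tau_k v_kj for a holder k gives negative,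
   supporting, tight prices as soon as G_z <= G_tau(v). *)
Lemma subgraph_prices {z : 'I_n -> 'I_m -> R} :
  allocation z -> subgraph_Gtau z tau v ->
  exists p, [/\ forall j, p j < 0, supporting p & tight p z].
Proof.
move=> hz hsub; have holder := allocation_holder hz.
pose p j := if [pick i | 0 < z i j] is Some k then tau k * v k j else 0.
have ht : tight p z.
  move=> i j hij; have /Gtau_edgeP hi := hsub i j hij.
  rewrite /p; case: pickP => [k hk|none]; last by have := none i; rewrite hij.
  apply/eqP; rewrite eq_le hi.
  by have /Gtau_edgeP := hsub k j hk; apply.
exists p; split => // [j | i j].
  have [k hk] := holder j; rewrite (ht k j hk).
  by rewrite pmulr_rlt0 ?tau_gt0.
have [k hk] := holder j; rewrite (ht k j hk).
by have /Gtau_edgeP := hsub k j hk; apply.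
Qed.

Lemma subgraph_competitive (z : 'I_n -> 'I_m -> R) :
  allocation z -> util_profile v z = u -> subgraph_Gtau z tau v ->
  competitive v b z.
Proof.
move=> hz hzu hsub; split => //.
have [p [hp hs ht]] := subgraph_prices hz hsub.
have cost_z i : cost p (z i) = b i.
  by rewrite (cost_tight i hz ht) util_profileE // tau_util.
exists p; split => // i; split; first by rewrite cost_z.
move=> x hx hcx; rewrite util_profileE //.
rewrite -(ler_pM2l (tau_gt0 i)) tau_util.
exact: le_trans (util_le_cost i hs hx) hcx.
Qed.

End Corollary5.

Theorem corollary5 (R : realFieldType) (n m : nat)
  (v : 'I_n -> 'I_m -> R) (b u : 'I_n -> R)
  (hv : forall i j, v i j < 0) (hb : forall i, b i < 0) (hu : forall i, u i < 0) :
  let tau := fun i => b i / u i in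
  (competitive_profile v b u <->
     exists z, allocation z /\ util_profile v z = u /\ subgraph_Gtau z tau v) /\
  (forall z : 'I_n -> 'I_m -> R,
     (allocation z /\ util_profile v z = u /\ subgraph_Gtau z tau v) <->
     (competitive v b z /\ util_profile v z = u)).
Proof.
move=> tau.
have same_sets z : (allocation z /\ util_profile v z = u /\
    subgraph_Gtau z tau v) <-> (competitive v b z /\ util_profile v z = u).
  split=> [[hz [hzu hsub]] | [hc hzu]].
  - by split=> //; exact: subgraph_competitive hv hb hu z hz hzu hsub.
  - split; first by case: hc.
    by split=> //; exact: competitive_subgraph hv hb hu z hc hzu.
split=> //; split=> -[z /same_sets hz]; by exists z.
Qed.
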